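(* There is an absolute constant $C>0$ with the following property. Let $\epsilon\in(0,1/2]$ with $1/\epsilon$ an integer, and let $\delta\in(0,1/2)$. Let $s\ge C\epsilon^{-1}\ln(1/(\epsilon\delta))$ be an integer. Let $t\ge 1$ and let $x=(x_1,\dots,x_t)$ be a vector of positive weights, where item $i$ has weight $x_i$. Let $S\subseteq[t]$ be a weighted random sample without replacement of size $\min\{t,s\}$ from the items $1,\dots,t$ with weights $x_1,\dots,x_t$. Let $$T=\{i\in[t]: x_i\ge\epsilon\|x_{\mathrm{tail}(1/\epsilon)}\|_1\}.$$ Then: - $|T|\le 2/\epsilon$; - $\Pr[T\subseteq S]\ge 1-\delta$; - whenever $T\subseteq S$, the $\min\{|S|,2/\epsilon\}$ elements of $S$ with largest weights, ties broken arbitrarily, contain $T$.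
   Context: For $x\in\mathbb{R}^t$ and an integer $m\ge 0$, $x_{\mathrm{tail}(m)}$ is the vector equal to $x$ except that its $m$ largest coordinates (in absolute value, ties broken arbitrarily) are set to $0$. **Weighted sampling without replacement.** A single weighted random sample from a finite collection of items with positive weights is one item, where an item of weight $w$ is chosen with probability $w$ divided by the total weight. A weighted random sample without replacement of size $m$ is produced as follows: start with $S=\emptyset$; for $i=1,\dots,m$, draw a single weighted random sample from the items not yet in $S$ and add it to $S$. *)

From Stdlib Require Import Reals Lra Lia List Arith.
Import ListNotations.
Open Scope R_scope.

Definition idx (t : nat) : list nat := seq 1 t.

Definition sumR (f : nat -> R) (l : list nat) : R :=
  fold_right (fun i acc => f i + acc) 0 l.

(* A is a choice (ties broken arbitrarily) of the m largest coordinates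
   (in absolute value) of x among the indices in U (all of U if |U| <= m). *)
Definition is_top_set (x : nat -> R) (U : list nat) (m : nat) (A : list nat) : Prop :=
  NoDup A /\ length A = Nat.min m (length U) /\ incl A U /\
  (forall i j, In i A -> In j U -> ~ In j A -> Rabs (x j) <= Rabs (x i)).

(* || x_tail(m) ||_1, where A is the chosen set of m largest coordinates:
   the l1 norm of x with the coordinates in A set to 0. *)
Definition tail_norm1 (x : nat -> R) (t : nat) (A : list nat) : R :=
  sumR (fun i => if in_dec Nat.eq_dec i A then 0 else Rabs (x i)) (idx t).

Definition heavy_set (x : nat -> R) (t : nat) (eps N : R) : list nat :=
  filter (fun i => if Rle_dec (eps * N) (x i) then true else false) (idx t).

Definition subsetb (T S : list nat) : bool :=
  forallb (fun i => existsb (Nat.eqb i) S) T.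

(* Weighted sampling without replacement.
   wswor x m avail chosen E = probability that the event E holds for the final
   sample, when starting from the already chosen items [chosen], the remaining
   items [avail], and m more draws are made: at each draw an item i of the
   remaining ones is chosen with probability x i / (total remaining weight). *)
Fixpoint wswor (x : nat -> R) (m : nat) (avail chosen : list nat)
         (E : list nat -> bool) : R :=
  match m with
  | O => if E chosen then 1 else 0
  | S m' =>
      let W := sumR x avail in
      sumR (fun i => x i / W * wswor x m' (remove Nat.eq_dec i avail) (i :: chosen) E)
           avail
  end.

Definition sample_prob (x : nat -> R) (t m : nat) (E : list nat -> bool) : R :=
  wswor x m (idx t) [] E.

(* Write K = 1/eps (an integer >= 2), let A be the chosen K largest weights,
   N = ||x_tail(K)||_1 the weight outside A, and T the heavy items, x_i >= N/K.
   1. |T| <= 2K: at most K heavy items lie in A, and every heavy item outside A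
      has weight >= N/K, while their total weight is at most N.
   2. A heavy item i is drawn with probability >= 1 - (K/(K+1))^(s-K):
      besides i, the remaining items are the at most K "bad" items of A and
      "light" items of total weight <= N <= K x_i.  As long as i is missing,
      a draw either hits i, hits a bad item (at most K times), or otherwise the
      light weight shrinks the miss probability by the factor K/(K+1).
      A union bound over T and the size condition on s give Pr[T in S] >= 1-delta.
   3. If T is inside S but some i in T is not among the 2K heaviest items B
      of S, then every item of B weighs at least x_i and is therefore heavy
      as well, so i together with B would be 2K+1 heavy items, contradicting 1.
   The file develops finite sums, the expectation calculus of the sampling
   process, the miss-probability bound, the combinatorics of heavy items and
   the numeric estimate, and derives the theorem with C = 5 at the end. *)

From Stdlib Require Import Reals List Arith Lra Lia.
Import ListNotations.
Open Scope R_scope.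

Lemma sumR_ext_in (f g : nat -> R) l :
  (forall j, In j l -> f j = g j) -> sumR f l = sumR g l.
Proof.
  induction l as [|a l IH]; intros H; simpl; auto.
  rewrite H by (left; auto). rewrite IH; auto.
  intros j Hj; apply H; right; auto.
Qed.

Lemma sumR_le_in (f g : nat -> R) l :
  (forall j, In j l -> f j <= g j) -> sumR f l <= sumR g l.
Proof.
  induction l as [|a l IH]; intros H; simpl; [lra|].
  assert (f a <= g a) by (apply H; left; auto).
  assert (sumR f l <= sumR g l) by (apply IH; intros; apply H; right; auto).
  lra.
Qed.

Lemma sumR_plus (f g : nat -> R) l :
  sumR (fun j => f j + g j) l = sumR f l + sumR g l.
Proof. induction l; simpl; lra. Qed.

Lemma sumR_scale_r (c : R) (f : nat -> R) l :
  sumR (fun j => f j * c) l = sumR f l * c.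
Proof. induction l; simpl; [lra|]. rewrite IHl. ring. Qed.

Lemma sumR_const (c : R) l : sumR (fun _ => c) l = INR (length l) * c.
Proof.
  induction l as [|a l IH]; [simpl; lra|].
  change (c + sumR (fun _ => c) l = INR (S (length l)) * c).
  rewrite IH, S_INR. ring.
Qed.

Lemma sumR_nonneg (f : nat -> R) l :
  (forall j, In j l -> 0 <= f j) -> 0 <= sumR f l.
Proof.
  intros H. replace 0 with (sumR (fun _ => 0) l) by (rewrite sumR_const; ring).
  apply sumR_le_in. auto.
Qed.

Lemma sumR_pos (f : nat -> R) l :
  (forall j, In j l -> 0 < f j) -> l <> [] -> 0 < sumR f l.
Proof.
  destruct l as [|a l]; intros H Hn; [congruence|]. simpl.
  assert (0 < f a) by (apply H; left; auto).
  assert (0 <= sumR f l) by (apply sumR_nonneg; intros; left; apply H; right; auto).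
  lra.
Qed.

Lemma sumR_in_ge (f : nat -> R) l a :
  (forall j, In j l -> 0 <= f j) -> In a l -> f a <= sumR f l.
Proof.
  induction l as [|b l IH]; intros H Ha; [destruct Ha|]. simpl.
  assert (0 <= f b) by (apply H; left; auto).
  assert (0 <= sumR f l) by (apply sumR_nonneg; intros; apply H; right; auto).
  destruct Ha as [<-|Ha]; [lra|].
  assert (f a <= sumR f l) by (apply IH; auto; intros; apply H; right; auto).
  lra.
Qed.

Lemma sumR_remove_le (f : nat -> R) l a :
  (forall j, In j l -> 0 <= f j) -> sumR f (remove Nat.eq_dec a l) <= sumR f l.
Proof.
  induction l as [|b l IH]; intros H; simpl; [lra|].
  assert (0 <= f b) by (apply H; left; auto).
  assert (sumR f (remove Nat.eq_dec a l) <= sumR f l)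
    by (apply IH; intros; apply H; right; auto).
  destruct (Nat.eq_dec a b); simpl; lra.
Qed.

Lemma sumR_remove_in (f : nat -> R) l a :
  (forall j, In j l -> 0 <= f j) -> In a l ->
  f a + sumR f (remove Nat.eq_dec a l) <= sumR f l.
Proof.
  induction l as [|b l IH]; intros H Ha; [destruct Ha|]. simpl.
  assert (0 <= f b) by (apply H; left; auto).
  destruct (Nat.eq_dec a b) as [->|Hab].
  - assert (sumR f (remove Nat.eq_dec b l) <= sumR f l)
      by (apply sumR_remove_le; intros; apply H; right; auto).
    lra.
  - destruct Ha as [->|Ha]; [congruence|]. simpl.
    assert (f a + sumR f (remove Nat.eq_dec a l) <= sumR f l)
      by (apply IH; auto; intros; apply H; right; auto).
    lra.
Qed.

Lemma sumR_incl (f : nat -> R) l L :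
  NoDup l -> incl l L -> (forall j, In j L -> 0 <= f j) -> sumR f l <= sumR f L.
Proof.
  revert L. induction l as [|a l IH]; intros L Hn Hi H; simpl.
  - apply sumR_nonneg; auto.
  - inversion Hn as [|? ? Ha Hl]; subst.
    assert (sumR f l <= sumR f (remove Nat.eq_dec a L)).
    { apply IH; auto.
      - intros j Hj. apply in_in_remove; [intros ->; auto|]. apply Hi; right; auto.
      - intros j Hj. apply in_remove in Hj. apply H; tauto. }
    assert (f a + sumR f (remove Nat.eq_dec a L) <= sumR f L)
      by (apply sumR_remove_in; auto; apply Hi; left; auto).
    lra.
Qed.

Lemma NoDup_remove_item (l : list nat) a :
  NoDup l -> NoDup (remove Nat.eq_dec a l).
Proof.
  induction l as [|b l IH]; intros H; simpl; auto.
  inversion H; subst. destruct (Nat.eq_dec a b); auto.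
  constructor; auto. intros Hi. apply in_remove in Hi. tauto.
Qed.

Lemma length_remove_NoDup (l : list nat) a :
  NoDup l -> In a l -> length (remove Nat.eq_dec a l) = (length l - 1)%nat.
Proof.
  induction l as [|b l IH]; intros H Ha; [destruct Ha|].
  inversion H; subst. simpl.
  destruct (Nat.eq_dec a b) as [->|Hab].
  - rewrite notin_remove; auto. lia.
  - destruct Ha as [->|Ha]; [congruence|]. simpl. rewrite IH; auto.
    destruct l; [destruct Ha|]. simpl; lia.
Qed.

Lemma filter_remove_le (p : nat -> bool) l a :
  (length (filter p (remove Nat.eq_dec a l)) <= length (filter p l))%nat.
Proof.
  induction l as [|b l IH]; simpl; auto.
  destruct (Nat.eq_dec a b); simpl; destruct (p b); simpl; lia.
Qed.

Lemma filter_remove_lt (p : nat -> bool) l a :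
  In a l -> p a = true ->
  (length (filter p (remove Nat.eq_dec a l)) < length (filter p l))%nat.
Proof.
  induction l as [|b l IH]; intros Ha Hp; [destruct Ha|]. simpl.
  destruct (Nat.eq_dec a b) as [->|Hab].
  - rewrite Hp. pose proof (filter_remove_le p l b). simpl. lia.
  - destruct Ha as [->|Ha]; [congruence|]. simpl.
    specialize (IH Ha Hp). destruct (p b); simpl; lia.
Qed.

Definition memb (A : list nat) (j : nat) : bool :=
  if in_dec Nat.eq_dec j A then true else false.

Lemma memb_spec A j : memb A j = true <-> In j A.
Proof. unfold memb. destruct in_dec; split; auto; discriminate. Qed.

(** The sampling process as an expectation operator *)

(* [wexp x m avail chosen f] is the expected value of [f] at the final sample
   when m more items are drawn from [avail] after [chosen] was picked;
   [wswor] is the special case of an indicator function. *)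
Fixpoint wexp (x : nat -> R) (m : nat) (avail chosen : list nat)
         (f : list nat -> R) : R :=
  match m with
  | O => f chosen
  | S m' =>
      sumR (fun i => x i / sumR x avail *
                     wexp x m' (remove Nat.eq_dec i avail) (i :: chosen) f) avail
  end.

Definition positive_on (x : nat -> R) (l : list nat) : Prop :=
  forall j, In j l -> 0 < x j.

Lemma positive_on_remove x l a :
  positive_on x l -> positive_on x (remove Nat.eq_dec a l).
Proof. intros H j Hj. apply in_remove in Hj. apply H; tauto. Qed.

Lemma wswor_wexp x m av ch E :
  wswor x m av ch E = wexp x m av ch (fun S => if E S then 1 else 0).
Proof.
  revert av ch. induction m; intros av ch; simpl; auto.
  apply sumR_ext_in. intros j _. rewrite IHm. reflexivity.
Qed.

Section Expectation.
Variable x : nat -> R.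

Lemma draw_prob_nonneg av j :
  positive_on x av -> In j av -> 0 <= x j / sumR x av.
Proof.
  intros H Hj. assert (0 < x j) by auto.
  assert (0 < sumR x av) by (apply sumR_pos; auto; intros ->; destruct Hj).
  apply Rlt_le, Rdiv_lt_0_compat; lra.
Qed.

Lemma wexp_le m av ch f g :
  positive_on x av -> (forall S, f S <= g S) -> wexp x m av ch f <= wexp x m av ch g.
Proof.
  intros Hp H. revert av ch Hp. induction m; intros av ch Hp; simpl; auto.
  apply sumR_le_in. intros j Hj. apply Rmult_le_compat_l.
  - apply draw_prob_nonneg; auto.
  - apply IHm, positive_on_remove; auto.
Qed.

Lemma wexp_add m av ch f g :
  wexp x m av ch (fun S => f S + g S) = wexp x m av ch f + wexp x m av ch g.
Proof.
  revert av ch. induction m; intros av ch; simpl; auto.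
  rewrite <- sumR_plus. apply sumR_ext_in. intros j _. rewrite IHm. ring.
Qed.

Lemma wexp_zero m av ch : wexp x m av ch (fun _ => 0) = 0.
Proof.
  revert av ch. induction m; intros av ch; simpl; auto.
  rewrite (sumR_ext_in _ (fun _ => 0)), sumR_const; [ring|].
  intros j _. rewrite IHm. ring.
Qed.

Lemma wexp_sum m av ch (h : nat -> list nat -> R) T :
  wexp x m av ch (fun S => sumR (fun i => h i S) T) =
  sumR (fun i => wexp x m av ch (h i)) T.
Proof.
  induction T as [|a T IH]; simpl.
  - apply wexp_zero.
  - rewrite <- IH, <- wexp_add. reflexivity.
Qed.

Lemma wexp_one m av ch :
  positive_on x av -> NoDup av -> (m <= length av)%nat ->
  wexp x m av ch (fun _ => 1) = 1.
Proof.
  revert av ch. induction m; intros av ch Hp Hn Hl; simpl; auto.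
  assert (av <> []) by (intros ->; simpl in Hl; lia).
  assert (0 < sumR x av) by (apply sumR_pos; auto).
  rewrite (sumR_ext_in _ (fun j => x j * / sumR x av)), sumR_scale_r; [field; lra|].
  intros j Hj. rewrite IHm.
  - unfold Rdiv; ring.
  - apply positive_on_remove; auto.
  - apply NoDup_remove_item; auto.
  - rewrite length_remove_NoDup; auto. lia.
Qed.

Lemma wexp_le1 m av ch f :
  positive_on x av -> (forall S, f S <= 1) -> wexp x m av ch f <= 1.
Proof.
  revert av ch. induction m; intros av ch Hp H; simpl; auto.
  destruct av as [|a l]; [simpl; lra|].
  assert (0 < sumR x (a :: l)) by (apply sumR_pos; auto; discriminate).
  apply Rle_trans with (sumR (fun j => x j * / sumR x (a :: l)) (a :: l)).
  - apply sumR_le_in. intros j Hj.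
    rewrite <- (Rmult_1_r (x j * _)). apply Rmult_le_compat_l.
    + apply draw_prob_nonneg; auto.
    + apply IHm; auto. apply positive_on_remove; auto.
  - rewrite sumR_scale_r. right; field. lra.
Qed.

Definition miss (i : nat) (S : list nat) : R :=
  if existsb (Nat.eqb i) S then 0 else 1.

Lemma miss_in i S : In i S -> miss i S = 0.
Proof.
  intros H. unfold miss. replace (existsb (Nat.eqb i) S) with true; auto.
  symmetry. apply existsb_exists. exists i. split; auto. apply Nat.eqb_refl.
Qed.

Lemma wexp_miss_chosen m av ch i : In i ch -> wexp x m av ch (miss i) = 0.
Proof.
  revert av ch. induction m; intros av ch H; simpl.
  - apply miss_in; auto.
  - rewrite (sumR_ext_in _ (fun _ => 0)), sumR_const; [ring|].
    intros j _. rewrite IHm; [ring|right; auto].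
Qed.

Lemma wexp_miss_exhaust m av ch i :
  NoDup av -> In i av -> m = length av -> wexp x m av ch (miss i) = 0.
Proof.
  revert av ch. induction m; intros av ch Hn Hi Hl; simpl.
  - destruct av; [destruct Hi|simpl in Hl; lia].
  - rewrite (sumR_ext_in _ (fun _ => 0)), sumR_const; [ring|].
    intros j Hj. destruct (Nat.eq_dec j i) as [->|Hji].
    + rewrite wexp_miss_chosen; [ring|left; auto].
    + rewrite IHm; [ring| |apply in_in_remove; auto|].
      * apply NoDup_remove_item; auto.
      * rewrite length_remove_NoDup; auto. lia.
Qed.

(* Pointwise union bound: if S misses no item of T then T is contained in S. *)
Lemma subset_or_miss T S :
  1 <= (if subsetb T S then 1 else 0) + sumR (fun i => miss i S) T.
Proof.
  induction T as [|a T IH]; simpl; [lra|].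
  unfold subsetb in *. simpl.
  assert (0 <= sumR (fun i => miss i S) T)
    by (apply sumR_nonneg; intros; unfold miss; destruct existsb; lra).
  unfold miss at 1. destruct (existsb (Nat.eqb a) S); simpl; lra.
Qed.

Lemma sample_union_bound t m T :
  positive_on x (idx t) -> (m <= t)%nat ->
  1 - sumR (fun i => wexp x m (idx t) [] (miss i)) T
  <= sample_prob x t m (fun S => subsetb T S).
Proof.
  intros Hp Hm. unfold sample_prob. rewrite wswor_wexp, <- wexp_sum.
  assert (Hlen : (m <= length (idx t))%nat) by (unfold idx; rewrite length_seq; auto).
  rewrite <- (wexp_one m (idx t) [] Hp (seq_NoDup t 1) Hlen) at 1.
  enough (wexp x m (idx t) [] (fun _ => 1) <=
          wexp x m (idx t) [] (fun S => (if subsetb T S then 1 else 0) +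
                                        sumR (fun i => miss i S) T)) by
    (rewrite wexp_add in H; lra).
  apply wexp_le; auto. intros S. apply subset_or_miss.
Qed.

End Expectation.

(** Probability that a heavy item is never drawn *)

Definition shrink (K : R) : R := K / (K + 1).

Lemma shrink_pos K : 0 < K -> 0 < shrink K.
Proof. intros HK. unfold shrink. apply Rdiv_lt_0_compat; lra. Qed.

(* One-draw inequality: if the light weight G is at most K times the weight I
   of the target item, then bad draws (weight B, factor shrink K) and light
   draws (factor 1) together lose at least the factor shrink K. *)
Lemma shrink_mix K I B G :
  0 < K -> 0 <= B -> G <= K * I ->
  B * shrink K + G <= shrink K * (I + B + G).
Proof.
  intros HK HB HG. unfold shrink.
  apply Rmult_le_reg_r with (K + 1); [lra|].
  replace ((B * (K / (K + 1)) + G) * (K + 1)) with (B * K + G * (K + 1)) by (field; lra).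
  replace (K / (K + 1) * (I + B + G) * (K + 1)) with (K * (I + B + G)) by (field; lra).
  lra.
Qed.

Section MissBound.
Variables (x : nat -> R) (bad : nat -> bool) (i : nat) (K : R).
Hypothesis K_pos : 0 < K.
Hypothesis i_not_bad : bad i = false.

Definition light (j : nat) : R := if (bad j || (j =? i)%nat)%bool then 0 else x j.

Lemma weight_split av :
  sumR x av = sumR (fun j => if (j =? i)%nat then x j else 0) av
              + sumR (fun j => if bad j then x j else 0) av + sumR light av.
Proof.
  rewrite <- !sumR_plus. apply sumR_ext_in. intros j _. unfold light.
  destruct (Nat.eqb_spec j i) as [->|_].
  - rewrite i_not_bad. simpl. ring.
  - destruct (bad j); simpl; ring.
Qed.

(* The claim proved by induction on the number m of draws: if the light
   weight is at most K x_i and at most a bad items are available, then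
   after m draws i is missing with probability at most shrink K ^ (m - a). *)
Definition miss_bounded (m : nat) : Prop :=
  forall av ch a,
    positive_on x av -> In i av -> sumR light av <= K * x i ->
    (length (filter bad av) <= a)%nat ->
    wexp x m av ch (miss i) <= shrink K ^ (m - a).

(* Contribution of drawing j first: drawing i ends the game, a bad draw uses
   up one bad item of the budget, a light draw keeps the budget. *)
Lemma miss_draw m av ch a j :
  miss_bounded m -> positive_on x av -> In i av -> sumR light av <= K * x i ->
  (length (filter bad av) <= a <= m)%nat -> In j av ->
  x j / sumR x av * wexp x m (remove Nat.eq_dec j av) (j :: ch) (miss i)
  <= ((if bad j then x j else 0) * shrink K + light j) * / sumR x av
     * shrink K ^ (m - a).
Proof.
  intros IH Hp Hi Hl Ha Hj.
  destruct (Nat.eqb_spec j i) as [->|Hji].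
  { rewrite wexp_miss_chosen by (left; auto).
    unfold light. rewrite i_not_bad, Nat.eqb_refl. simpl. lra. }
  assert (Hp' : positive_on x (remove Nat.eq_dec j av)) by (apply positive_on_remove; auto).
  assert (Hi' : In i (remove Nat.eq_dec j av)) by (apply in_in_remove; auto).
  assert (Hl' : sumR light (remove Nat.eq_dec j av) <= K * x i).
  { eapply Rle_trans; [apply sumR_remove_le|]; auto.
    intros l Hl0. unfold light. destruct orb; [lra|left; apply Hp; auto]. }
  assert (Hc : 0 <= x j / sumR x av) by (apply draw_prob_nonneg; auto).
  unfold light. apply Nat.eqb_neq in Hji. rewrite Hji, Bool.orb_false_r.
  destruct (bad j) eqn:Hb.
  - pose proof (filter_remove_lt bad av j Hj Hb).
    pose proof (IH _ (j :: ch) (a - 1)%nat Hp' Hi' Hl' ltac:(lia)) as IHj.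
    replace (m - (a - 1))%nat with (S (m - a)) in IHj by lia.
    eapply Rle_trans; [apply Rmult_le_compat_l; eauto|].
    simpl. right. unfold Rdiv. ring.
  - pose proof (filter_remove_le bad av j).
    pose proof (IH _ (j :: ch) a Hp' Hi' Hl' ltac:(lia)) as IHj.
    eapply Rle_trans; [apply Rmult_le_compat_l; eauto|].
    right. unfold Rdiv. ring.
Qed.

Lemma miss_bounded_succ m : miss_bounded m -> miss_bounded (S m).
Proof.
  intros IH av ch a Hp Hi Hl Ha.
  pose proof (shrink_pos K K_pos) as Hq.
  destruct (le_lt_dec (S m) a) as [Hma|Hma].
  { replace (S m - a)%nat with 0%nat by lia.
    apply wexp_le1; auto. intros S. unfold miss. destruct existsb; lra. }
  replace (S m - a)%nat with (S (m - a)) by lia. set (n := (m - a)%nat).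
  simpl wexp. set (W := sumR x av).
  assert (HW : 0 < W) by (apply sumR_pos; auto; intros ->; destruct Hi).
  eapply Rle_trans.
  { apply sumR_le_in. intros j Hj. apply (miss_draw m av ch a j); auto. lia. }
  rewrite !sumR_scale_r, sumR_plus, sumR_scale_r. fold W n.
  set (I := sumR (fun j => if (j =? i)%nat then x j else 0) av).
  set (B := sumR (fun j => if bad j then x j else 0) av).
  set (G := sumR light av) in *.
  assert (HWs : W = I + B + G) by apply weight_split.
  assert (HI : x i <= I).
  { pose proof (sumR_in_ge (fun j => if (j =? i)%nat then x j else 0) av i) as Hin.
    cbv beta in Hin. rewrite Nat.eqb_refl in Hin. apply Hin; auto.
    intros j Hj. destruct Nat.eqb; [left; apply Hp; auto|lra]. }
  assert (HB : 0 <= B)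
    by (apply sumR_nonneg; intros j Hj; destruct (bad j); [left; apply Hp; auto|lra]).
  assert (Hmix : B * shrink K + G <= shrink K * W).
  { rewrite HWs. apply shrink_mix; auto.
    apply Rle_trans with (K * x i); [exact Hl|apply Rmult_le_compat_l; lra]. }
  assert (0 < shrink K ^ n) by (apply pow_lt; auto).
  simpl pow. apply Rmult_le_reg_r with W; [lra|].
  replace ((B * shrink K + G) * / W * shrink K ^ n * W)
    with ((B * shrink K + G) * shrink K ^ n) by (field; lra).
  nra.
Qed.

Lemma miss_bound m : miss_bounded m.
Proof.
  induction m as [|m IH]; [|apply miss_bounded_succ; auto].
  intros av ch a _ _ _ _. simpl. unfold miss. destruct existsb; lra.
Qed.

End MissBound.

(** Heavy items *)

Section HeavyItems.
Variables (x : nat -> R) (t k : nat) (A : list nat).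
Hypothesis k_pos : (0 < k)%nat.
Hypothesis x_pos : positive_on x (idx t).
Hypothesis A_top : is_top_set x (idx t) k A.

Local Notation N := (tail_norm1 x t A).
Local Notation T := (heavy_set x t (/ INR k) N).

Lemma top_members_le l : NoDup l -> incl l A -> (length l <= k)%nat.
Proof.
  destruct A_top as [_ [HAl _]]. intros Hn Hi.
  eapply Nat.le_trans; [apply NoDup_incl_length; eauto|]. rewrite HAl. lia.
Qed.

Lemma tail_norm_lower V c :
  NoDup V -> incl V (idx t) -> (forall j, In j V -> ~ In j A) ->
  (forall j, In j V -> c <= x j) -> INR (length V) * c <= N.
Proof.
  intros Hn Hi HA Hc. unfold tail_norm1.
  set (h := fun j => if in_dec Nat.eq_dec j A then 0 else Rabs (x j)).
  apply Rle_trans with (sumR h V).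
  - rewrite <- sumR_const. apply sumR_le_in. intros j Hj. unfold h.
    destruct in_dec as [HjA|_]; [exfalso; eapply HA; eauto|].
    rewrite Rabs_pos_eq by (apply Rlt_le, x_pos, Hi; auto). auto.
  - apply sumR_incl; auto. intros j _. unfold h. destruct in_dec; [lra|apply Rabs_pos].
Qed.

Lemma heavy_spec i : In i T <-> In i (idx t) /\ N <= INR k * x i.
Proof.
  assert (HK : 0 < INR k) by (apply lt_0_INR; auto).
  assert (Hscale : / INR k * N <= x i <-> N <= INR k * x i).
  { split; intros H.
    - replace N with (INR k * (/ INR k * N)) by (field; lra).
      apply Rmult_le_compat_l; lra.
    - replace (x i) with (/ INR k * (INR k * x i)) by (field; lra).
      apply Rmult_le_compat_l; [apply Rlt_le, Rinv_0_lt_compat|]; lra. }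
  unfold heavy_set. rewrite filter_In.
  destruct Rle_dec; split; intros [H1 H2]; split; try tauto; try discriminate.
Qed.

(* At most k heavy items lie outside A: each weighs at least N/k. *)
Lemma heavy_outside_card V :
  NoDup V -> incl V T -> (forall j, In j V -> ~ In j A) -> INR (length V) <= INR k.
Proof.
  intros Hn Hi HA.
  assert (HK : 0 < INR k) by (apply lt_0_INR; auto).
  assert (HVt : incl V (idx t)) by (intros j Hj; apply heavy_spec, Hi; auto).
  destruct V as [|v V']; [simpl; lra|].
  assert (Hv : N <= INR k * x v) by (apply heavy_spec, Hi; left; auto).
  assert (HNpos : 0 < N).
  { pose proof (tail_norm_lower [v] (x v)) as Hone. simpl in Hone.
    assert (0 < x v) by (apply x_pos, HVt; left; auto).
    enough (x v <= N) by lra.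
    replace (x v) with (1 * x v) by ring. apply Hone.
    - repeat constructor. auto.
    - intros j [<-|[]]. apply HVt. left; auto.
    - intros j [<-|[]]. apply HA. left; auto.
    - intros j [<-|[]]. lra. }
  assert (Hlow : INR (length (v :: V')) * (N / INR k) <= N).
  { apply tail_norm_lower; auto. intros j Hj.
    apply Hi, heavy_spec in Hj. destruct Hj as [_ Hj].
    apply Rmult_le_reg_l with (INR k); [lra|].
    replace (INR k * (N / INR k)) with N by (field; lra). auto. }
  apply Rmult_le_reg_r with (N / INR k); [apply Rdiv_lt_0_compat; lra|].
  replace (INR k * (N / INR k)) with N by (field; lra). auto.
Qed.

Lemma heavy_card : INR (length T) <= 2 * INR k.
Proof.
  assert (HTnd : NoDup T) by (apply NoDup_filter, seq_NoDup).
  rewrite <- (filter_length (memb A) T), plus_INR.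
  assert (INR (length (filter (memb A) T)) <= INR k).
  { apply le_INR, top_members_le; [apply NoDup_filter; auto|].
    intros j Hj. apply filter_In in Hj. apply memb_spec; tauto. }
  assert (INR (length (filter (fun j => negb (memb A j)) T)) <= INR k).
  { apply heavy_outside_card.
    - apply NoDup_filter; auto.
    - intros j Hj. apply filter_In in Hj; tauto.
    - intros j Hj HjA. apply filter_In in Hj. apply memb_spec in HjA.
      rewrite HjA in Hj. simpl in Hj. destruct Hj; discriminate. }
  lra.
Qed.

Lemma heavy_upward i j :
  In i T -> In j (idx t) -> x i <= x j -> In j T.
Proof.
  intros Hi Hj Hij. apply heavy_spec in Hi. destruct Hi as [_ Hi].
  apply heavy_spec. split; auto.
  assert (0 <= INR k) by apply pos_INR. nra.
Qed.

(* Third claim: 2k+1 items all at least as heavy as a heavy item would be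
   2k+1 heavy items, so a heavy item of S is among the 2k heaviest of S. *)
Lemma heavy_in_top S B :
  incl S (idx t) -> incl T S ->
  is_top_set x S (Nat.min (length S) (2 * k)) B -> incl T B.
Proof.
  intros HSi HTS [HBn [HBl [HBi HBd]]] i Hi.
  destruct (le_lt_dec (length S) (2 * k)) as [Hle|Hgt].
  - apply (NoDup_length_incl (l' := S) HBn); auto. rewrite HBl. lia.
  - destruct (in_dec Nat.eq_dec i B) as [|HiB]; auto. exfalso.
    assert (HiS : In i S) by auto.
    assert (Hup : incl (i :: B) T).
    { intros j [<-|Hj]; auto. apply (heavy_upward i j); auto.
      pose proof (HBd j i Hj HiS HiB) as Hij.
      rewrite !Rabs_pos_eq in Hij by (apply Rlt_le, x_pos; auto). auto. }
    assert (HiB_nd : NoDup (i :: B)) by (constructor; auto).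
    pose proof (NoDup_incl_length HiB_nd Hup) as Hlen.
    assert (HBk : length (i :: B) = (2 * k + 1)%nat) by (simpl; rewrite HBl; lia).
    rewrite HBk in Hlen. apply le_INR in Hlen.
    rewrite plus_INR, mult_INR in Hlen. simpl INR in Hlen.
    pose proof heavy_card. lra.
Qed.

(* A heavy item i: the items of A other than i are the bad items, and
   the light weight is bounded by N <= k x_i. *)
Lemma heavy_miss_prob i m :
  In i T -> wexp x m (idx t) [] (miss i) <= shrink (INR k) ^ (m - k).
Proof.
  intros Hi. pose proof Hi as Hheavy. apply heavy_spec in Hheavy. destruct Hheavy as [Hit HN].
  set (bad := fun j => (memb A j && negb (j =? i)%nat)%bool).
  apply (miss_bound x bad i (INR k)); auto.
  - apply lt_0_INR; auto.
  - unfold bad. rewrite Nat.eqb_refl. apply Bool.andb_false_r.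
  - eapply Rle_trans; [|exact HN]. unfold tail_norm1.
    apply sumR_le_in. intros j _. unfold light, bad, memb.
    destruct in_dec; destruct (Nat.eqb j i); simpl;
      first [lra | apply Rle_abs | apply Rabs_pos].
  - apply top_members_le; [apply NoDup_filter, seq_NoDup|].
    intros j Hj. apply filter_In in Hj. destruct Hj as [_ Hj].
    unfold bad in Hj. apply andb_prop in Hj. apply memb_spec; tauto.
Qed.

(* Second claim: if one heavy item is missed with probability at most
   delta/(2k), the union bound over the at most 2k heavy items gives
   Pr[T in S] >= 1 - delta. *)
Lemma heavy_sampled s delta :
  0 < delta -> (k <= s)%nat -> shrink (INR k) ^ (s - k) <= delta / (2 * INR k) ->
  sample_prob x t (Nat.min t s) (fun S => subsetb T S) >= 1 - delta.
Proof.
  intros Hd Hks Hq.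
  assert (HK : 0 < INR k) by (apply lt_0_INR; auto).
  assert (Hmiss : forall i, In i T ->
            wexp x (Nat.min t s) (idx t) [] (miss i) <= delta / (2 * INR k)).
  { intros i Hi. destruct (le_lt_dec t s) as [Hts|Hst].
    - rewrite wexp_miss_exhaust.
      + apply Rlt_le, Rdiv_lt_0_compat; lra.
      + apply seq_NoDup.
      + apply heavy_spec; auto.
      + unfold idx. rewrite length_seq. lia.
    - rewrite Nat.min_r by lia. eapply Rle_trans; [apply heavy_miss_prob|]; auto. }
  assert (Hsum : sumR (fun i => wexp x (Nat.min t s) (idx t) [] (miss i)) T <= delta).
  { eapply Rle_trans; [apply sumR_le_in; exact Hmiss|]. rewrite sumR_const.
    pose proof heavy_card.
    apply Rle_trans with (2 * INR k * (delta / (2 * INR k))); [|right; field; lra].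
    apply Rmult_le_compat_r; auto. apply Rlt_le, Rdiv_lt_0_compat; lra. }
  pose proof (sample_union_bound x t (Nat.min t s) T x_pos (Nat.le_min_l t s)).
  lra.
Qed.

End HeavyItems.

(** The sample size condition *)

Lemma exp_pow y n : exp y ^ n = exp (INR n * y).
Proof.
  induction n; simpl pow; [simpl; rewrite Rmult_0_l, exp_0; auto|].
  rewrite IHn, S_INR, <- exp_plus. f_equal. ring.
Qed.

Lemma exp_le_mono a b : a <= b -> exp a <= exp b.
Proof. intros [H|H]; [left; apply exp_increasing; auto|subst; lra]. Qed.

(* 1 - u <= exp(-u) with u = 1/(K+1). *)
Lemma shrink_le_exp K : 0 < K -> shrink K <= exp (- / (K + 1)).
Proof.
  intros HK. eapply Rle_trans; [|apply exp_ineq1_le].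
  unfold shrink. right. field. lra.
Qed.

(* s >= 5 k ln(k/d) draws leave a heavy item undrawn with probability at
   most d/(2k), even after spending k draws on bad items: with L = ln(k/d) > 1,
   (s-k)/(k+1) >= 2L >= ln 2 + L = ln(2k/d), and shrink k <= exp(-1/(k+1)). *)
Lemma sample_size_suffices (k s : nat) d :
  (2 <= k)%nat -> 0 < d < 1/2 -> INR s >= 5 * INR k * ln (INR k / d) ->
  (k <= s)%nat /\ shrink (INR k) ^ (s - k) <= d / (2 * INR k).
Proof.
  intros Hk Hd Hs. set (K := INR k) in *.
  assert (HK : 2 <= K) by (unfold K; replace 2 with (INR 2) by (simpl; lra); apply le_INR; auto).
  set (L := ln (K / d)) in *.
  assert (H4 : 4 < K / d).
  { apply Rmult_lt_reg_r with d; [lra|]. unfold Rdiv. rewrite Rmult_assoc, Rinv_l by lra. nra. }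
  assert (HL : 1 < L).
  { unfold L. rewrite <- (ln_exp 1). apply ln_increasing; [apply exp_pos|].
    pose proof exp_le_3. lra. }
  assert (Hln2 : ln 2 < 1).
  { rewrite <- (ln_exp 1). apply ln_increasing; [lra|].
    pose proof (exp_ineq1 1 ltac:(lra)). lra. }
  assert (Hks : (k <= s)%nat) by (apply INR_le; fold K; nra).
  split; auto.
  set (n := (s - k)%nat).
  assert (Hn : INR n = INR s - K) by (unfold n, K; apply minus_INR; auto).
  eapply Rle_trans.
  { apply pow_incr. split; [apply Rlt_le, shrink_pos; lra|apply shrink_le_exp; lra]. }
  rewrite exp_pow.
  replace (d / (2 * K)) with (exp (ln (d / (2 * K))))
    by (rewrite exp_ln; auto; apply Rdiv_lt_0_compat; lra).
  apply exp_le_mono.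
  replace (d / (2 * K)) with (/ (2 * (K / d))) by (field; lra).
  rewrite ln_Rinv by (apply Rmult_lt_0_compat; lra).
  rewrite ln_mult by lra. fold L.
  replace (INR n * - / (K + 1)) with (- (INR n / (K + 1))) by (field; lra).
  apply Ropp_le_contravar.
  apply Rmult_le_reg_r with (K + 1); [lra|].
  replace (INR n / (K + 1) * (K + 1)) with (INR n) by (field; lra).
  nra.
Qed.

Theorem mainTheorem6 :
  exists C : R, C > 0 /\
  forall (eps : R) (k : nat) (delta : R) (s t : nat) (x : nat -> R),
    0 < eps <= 1/2 ->
    1 / eps = INR k ->
    0 < delta < 1/2 ->
    INR s >= C / eps * ln (1 / (eps * delta)) ->
    (1 <= t)%nat ->
    (forall i, In i (idx t) -> 0 < x i) ->
    forall A : list nat,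
      is_top_set x (idx t) k A ->
      let T := heavy_set x t eps (tail_norm1 x t A) in
      INR (length T) <= 2 / eps /\
      sample_prob x t (Nat.min t s) (fun S => subsetb T S) >= 1 - delta /\
      (forall S : list nat,
         NoDup S -> incl S (idx t) -> length S = Nat.min t s ->
         incl T S ->
         forall B : list nat,
           is_top_set x S (Nat.min (length S) (2 * k)) B ->
           incl T B).
Proof.
  exists 5. split; [lra|].
  intros eps k delta s t x Heps Hk Hd Hs _ Hx A HA T.
  assert (HK2 : 2 <= INR k)
    by (rewrite <- Hk; apply Rmult_le_reg_r with eps; [lra|]; field_simplify; lra).
  assert (Hk2 : (2 <= k)%nat) by (apply INR_le; simpl; lra).
  assert (Heps_k : eps = / INR k) by (rewrite <- Hk; field; lra).
  assert (Hsize : INR s >= 5 * INR k * ln (INR k / delta)).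
  { rewrite Heps_k in Hs.
    replace (5 * INR k) with (5 / / INR k) by (field; lra).
    replace (INR k / delta) with (1 / (/ INR k * delta)) by (field; lra). auto. }
  destruct (sample_size_suffices k s delta Hk2 Hd Hsize) as [Hks Hq].
  subst eps. split; [|split].
  - replace (2 / / INR k) with (2 * INR k) by (field; lra).
    apply heavy_card; auto. lia.
  - apply heavy_sampled; auto; [lia|lra].
  - intros S _ HSi _ HTS B HB. eapply heavy_in_top; eauto. lia.
Qed.
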